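(* Let $M$ be a duplicial module in a pre-additive category. For all $n\ge0$, $$\kappa_n=(1-b_{n+1}d_n)(1-d_{n-1}b_n)=(1-d_{n-1}b_n)(1-b_{n+1}d_n).$$
   Context: Let $\mathcal A$ be a pre-additive category. Let $\Lambda_+$ be the category with objects $[n]$, $n\ge0$, where $\Lambda_+([m],[n])$ is the set of weakly monotone $f:\mathbb Z\to\mathbb Z$ with $f(j+m+1)=f(j)+n+1$ for all $j$ and $f(0)\ge0$. Define $\varepsilon^n_i:[n-1]\to[n]$ ($n\ge1$, $0\le i\le n$) by $\varepsilon^n_i(j)=j$ for $0\le j<i$, $j+1$ for $i\le j\le n-1$, and $\eta^n_i:[n+1]\to[n]$ ($0\le i\le n+1$) by $\eta^n_i(j)=j$ for $0\le j\le i$, $j-1$ for $i<j\le n+1$. A duplicial module is a functor $M:\Lambda_+^{op}\to\mathcal A$; $M_n=M([n])$, $\partial_{n,i}=M(\varepsilon^n_i):M_n\to M_{n-1}$, $s_{n,i}=M(\eta^n_i):M_n\to M_{n+1}$. Convention $M_{-1}=0$, maps into/out of it zero. Define $b_n=\sum_{i=0}^n(-1)^i\partial_{n,i}$ ($b_0=0$), $d_n=\sum_{i=0}^{n+1}(-1)^is_{n,i}$ ($d_{-1}=0$), and the Karoubi operator $\kappa_n=(-1)^n(\partial_{n+1,0}s_{n,n+1}-s_{n-1,n}\partial_{n,0})$ (so $\kappa_0=\partial_{1,0}s_{0,1}$). *)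

From HB Require Import structures.
From mathcomp Require Import all_boot all_order all_algebra.
Set Implicit Arguments. Unset Strict Implicit. Unset Printing Implicit Defensive.
Import Order.TTheory GRing.Theory Num.Theory.
Local Open Scope ring_scope.

(** Pre-additive category: hom-sets are abelian groups, composition is
    bilinear. [cmp g f] is "g after f". *)
Record PreAdditive := {
  Ob : Type;
  Hom : Ob -> Ob -> zmodType;
  cmp : forall a b c : Ob, Hom b c -> Hom a b -> Hom a c;
  idm : forall a : Ob, Hom a a;
  compA : forall (a b c d : Ob) (h : Hom c d) (g : Hom b c) (f : Hom a b),
      cmp h (cmp g f) = cmp (cmp h g) f;
  comp1m : forall (a b : Ob) (f : Hom a b), cmp (idm b) f = f;
  compm1 : forall (a b : Ob) (f : Hom a b), cmp f (idm a) = f;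
  compDl : forall (a b c : Ob) (g1 g2 : Hom b c) (f : Hom a b),
      cmp (g1 + g2) f = cmp g1 f + cmp g2 f;
  compDr : forall (a b c : Ob) (g : Hom b c) (f1 f2 : Hom a b),
      cmp g (f1 + f2) = cmp g f1 + cmp g f2
}.
Arguments cmp {_ _ _ _}.
Arguments idm {_}.

(** Morphisms of Lambda_+ from [m] to [n]: weakly monotone f : Z -> Z with
    f(j+m+1) = f(j)+n+1 and f(0) >= 0. *)
Definition isLam (m n : nat) (f : int -> int) : Prop :=
  (forall x y : int, x <= y -> f x <= f y) /\
  (forall j : int, f (j + (m.+1)%:Z) = f j + (n.+1)%:Z) /\
  0 <= f 0.

(** A duplicial module: a functor Lambda_+^op -> C.  The morphism map is
    given on all functions Z -> Z, but only its values on Lambda_+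
    morphisms matter (functor laws are required only there). *)
Record Duplicial (C : PreAdditive) := {
  Mo : nat -> Ob C;
  Mf : forall m n : nat, (int -> int) -> @Hom C (Mo n) (Mo m);
  Mf_id : forall n : nat, Mf n n id = idm (Mo n);
  Mf_comp : forall (m n p : nat) (f g : int -> int),
      isLam m n f -> isLam n p g -> Mf m p (g \o f) = cmp (Mf m n f) (Mf n p g)
}.
Arguments Mo {_}.
Arguments Mf {_}.

(** epsilon^n_i : [n-1] -> [n] (n >= 1), extended periodically to Z. *)
Definition eps (n i : nat) (j : int) : int :=
  let r := (j %% n%:Z)%Z in
  (j %/ n%:Z)%Z * (n.+1)%:Z + (if r < i%:Z then r else r + 1).

(** eta^n_i : [n+1] -> [n], extended periodically to Z. *)
Definition eta (n i : nat) (j : int) : int :=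
  let r := (j %% (n.+2)%:Z)%Z in
  (j %/ (n.+2)%:Z)%Z * (n.+1)%:Z + (if r <= i%:Z then r else r - 1).

Section Ops.
Variables (C : PreAdditive) (M : Duplicial C).

Definition face (n i : nat) : @Hom C (Mo M n.+1) (Mo M n) := Mf M n n.+1 (eps n.+1 i).
Definition degen (n i : nat) : @Hom C (Mo M n) (Mo M n.+1) := Mf M n.+1 n (eta n i).

(** bb n = b_{n+1} : M_{n+1} -> M_n *)
Definition bb (n : nat) : @Hom C (Mo M n.+1) (Mo M n) :=
  \sum_(i < n.+2) face n i *~ ((-1) ^+ i).
Definition dd (n : nat) : @Hom C (Mo M n) (Mo M n.+1) :=
  \sum_(i < n.+2) degen n i *~ ((-1) ^+ i).

Definition bd (n : nat) : @Hom C (Mo M n) (Mo M n) := cmp (bb n) (dd n).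
(** d_{n-1} b_n : M_n -> M_n  (zero for n = 0, since M_{-1} = 0) *)
Definition db (n : nat) : @Hom C (Mo M n) (Mo M n) :=
  match n with 0 => 0 | k.+1 => cmp (dd k) (bb k) end.

Definition sface (n : nat) : @Hom C (Mo M n) (Mo M n) :=
  match n with 0 => 0 | k.+1 => cmp (degen k k.+1) (face k 0) end.

Definition kappa (n : nat) : @Hom C (Mo M n) (Mo M n) :=
  (cmp (face n 0) (degen n n.+1) - sface n) *~ ((-1) ^+ n).

End Ops.

From Pilot Require Import Defs.
From mathcomp Require Import all_boot all_order all_algebra.
From mathcomp Require Import zify ring.
From Stdlib Require Import FunctionalExtensionality.
Set Implicit Arguments. Unset Strict Implicit. Unset Printing Implicit Defensive.
Import Order.TTheory GRing.Theory Num.Theory.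
Local Open Scope ring_scope.

(* The simplicial identities make b and d square to zero, so the
   endomorphisms b d and d b of M_n annihilate each other on both sides and
   both products in the statement reduce to 1 - b d - d b.  Expanding b d
   with the mixed identities between faces and degeneracies, its terms
   cancel against those of d b except for the identity and the single term
   (-1)^(n+1) ∂_0 s_(n+1), to which no identity applies; together with the
   leftover term s_(n-1,n) ∂_0 of d b they make up -kappa. *)

Section PreAdditiveAlgebra.
Variable C : PreAdditive.

Lemma cmp0l (a b c : Ob C) (f : Defs.Hom a b) : cmp (0 : Defs.Hom b c) f = 0.
Proof. by apply: (addrI (cmp (0 : Defs.Hom b c) f)); rewrite -compDl !addr0. Qed.

Lemma cmp0r (a b c : Ob C) (g : Defs.Hom b c) : cmp g (0 : Defs.Hom a b) = 0.
Proof. by apply: (addrI (cmp g (0 : Defs.Hom a b))); rewrite -compDr !addr0. Qed.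

Lemma cmpNl (a b c : Ob C) (g : Defs.Hom b c) (f : Defs.Hom a b) :
  cmp (- g) f = - cmp g f.
Proof. by apply: (addrI (cmp g f)); rewrite -compDl !subrr cmp0l. Qed.

Lemma cmpNr (a b c : Ob C) (g : Defs.Hom b c) (f : Defs.Hom a b) :
  cmp g (- f) = - cmp g f.
Proof. by apply: (addrI (cmp g f)); rewrite -compDr !subrr cmp0r. Qed.

Lemma cmpBl (a b c : Ob C) (g1 g2 : Defs.Hom b c) (f : Defs.Hom a b) :
  cmp (g1 - g2) f = cmp g1 f - cmp g2 f.
Proof. by rewrite compDl cmpNl. Qed.

Lemma cmpBr (a b c : Ob C) (g : Defs.Hom b c) (f1 f2 : Defs.Hom a b) :
  cmp g (f1 - f2) = cmp g f1 - cmp g f2.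
Proof. by rewrite compDr cmpNr. Qed.

Lemma cmp_suml (a b c : Ob C) I (r : seq I) (P : pred I)
    (F : I -> Defs.Hom b c) (f : Defs.Hom a b) :
  cmp (\sum_(i <- r | P i) F i) f = \sum_(i <- r | P i) cmp (F i) f.
Proof.
apply: (big_ind2 (fun x y => cmp x f = y)) => //; first exact: cmp0l.
by move=> x1 x2 y1 y2 <- <-; rewrite compDl.
Qed.

Lemma cmp_sumr (a b c : Ob C) I (r : seq I) (P : pred I)
    (F : I -> Defs.Hom a b) (g : Defs.Hom b c) :
  cmp g (\sum_(i <- r | P i) F i) = \sum_(i <- r | P i) cmp g (F i).
Proof.
apply: (big_ind2 (fun x y => cmp g x = y)) => //; first exact: cmp0r.
by move=> x1 x2 y1 y2 <- <-; rewrite compDr.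
Qed.

Lemma cmpMzl (a b c : Ob C) (g : Defs.Hom b c) (f : Defs.Hom a b) (z : int) :
  cmp (g *~ z) f = cmp g f *~ z.
Proof.
have cmpMnl k : cmp (g *+ k) f = cmp g f *+ k.
  by elim: k => [|k IH]; rewrite ?cmp0l // !mulrS compDl IH.
case: z => k; first by rewrite -!pmulrn cmpMnl.
by rewrite NegzE !mulrNz cmpNl -!pmulrn cmpMnl.
Qed.

Lemma cmpMzr (a b c : Ob C) (g : Defs.Hom b c) (f : Defs.Hom a b) (z : int) :
  cmp g (f *~ z) = cmp g f *~ z.
Proof.
have cmpMnr k : cmp g (f *+ k) = cmp g f *+ k.
  by elim: k => [|k IH]; rewrite ?cmp0r // !mulrS compDr IH.
case: z => k; first by rewrite -!pmulrn cmpMnr.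
by rewrite NegzE !mulrNz cmpNr -!pmulrn cmpMnr.
Qed.

Lemma cmp_sub1_sub1 (a : Ob C) (x y : Defs.Hom a a) :
  cmp x y = 0 -> cmp (idm a - x) (idm a - y) = idm a - (x + y).
Proof.
move=> xy0; rewrite cmpBl !cmpBr comp1m compm1 comp1m xy0 subr0.
by rewrite opprD addrA addrAC.
Qed.

End PreAdditiveAlgebra.

Definition sgn (i : nat) : int := (-1) ^+ i.

Lemma sgnS i : sgn i.+1 = - sgn i.
Proof. by rewrite /sgn exprS mulN1r. Qed.

Lemma sgnD i j : sgn (i + j) = sgn i * sgn j.
Proof. exact: exprD. Qed.

Lemma sgn_double i : sgn (i + i) = 1.
Proof. by rewrite /sgn -signr_odd addnn odd_double. Qed.

Lemma cmp_signed_sums {C : PreAdditive} {a b c : Ob C} (A B : nat)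
    (F : nat -> Defs.Hom b c) (G : nat -> Defs.Hom a b) :
  cmp (\sum_(i < A) F i *~ sgn i) (\sum_(j < B) G j *~ sgn j) =
  \sum_(i < A) \sum_(j < B) cmp (F i) (G j) *~ sgn (i + j).
Proof.
rewrite cmp_suml; apply: eq_bigr => i _; rewrite cmpMzl cmp_sumr mulrz_suml.
by apply: eq_bigr => j _; rewrite cmpMzr -mulrzA sgnD mulrC.
Qed.

Definition qperiodic (p q : int) (f : int -> int) : Prop :=
  forall j, f (j + p) = f j + q.

Lemma qperiodicMz {p q : int} {f : int -> int} : qperiodic p q f ->
  forall x k, f (x + k * p) = f x + k * q.
Proof.
move=> fP.
have fPn x (k : nat) : f (x + k%:Z * p) = f x + k%:Z * q.
  elim: k => [|k IH]; first by rewrite !mul0r !addr0.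
  by rewrite -addn1 PoszD !mulrDl !mul1r addrA fP IH addrA.
move=> x [] k; first exact: fPn.
have := fPn (x + Negz k * p) k.+1.
by rewrite NegzE !mulNr subrK => ->; rewrite addrK.
Qed.

Lemma qperiodic_comp (p q r : int) (f g : int -> int) :
  qperiodic p q f -> qperiodic q r g -> qperiodic p r (g \o f).
Proof. by move=> fP gP j /=; rewrite fP gP. Qed.

Lemma divz_decomp (m : nat) (x : int) :
  exists2 k : nat, (k <= m)%N & x = k%:Z + (x %/ m.+1%:Z)%Z * m.+1%:Z.
Proof.
have r0 : 0 <= (x %% m.+1%:Z)%Z by apply: modz_ge0.
have r1 : (x %% m.+1%:Z)%Z < m.+1%:Z by apply: ltz_pmod.
exists `|(x %% m.+1%:Z)%Z|%N; first lia.
by rewrite abszE ger0_norm // addrC -divz_eq.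
Qed.

Lemma qperiodic_eq (m : nat) (q : int) (f g : int -> int) :
  qperiodic m.+1 q f -> qperiodic m.+1 q g ->
  (forall k : nat, (k <= m)%N -> f k%:Z = g k%:Z) -> f = g.
Proof.
move=> fP gP fg; apply: functional_extensionality => x.
have [k km ->] := divz_decomp m x.
by rewrite (qperiodicMz fP) (qperiodicMz gP) fg.
Qed.

Lemma qperiodic_isLam (m n : nat) (f : int -> int) :
  qperiodic m.+1 n.+1 f -> 0 <= f 0 ->
  (forall k : nat, (k <= m)%N -> f k%:Z <= f k.+1%:Z) -> isLam m n f.
Proof.
move=> fP f0 f_step; split; last by split.
have f_succ x : f x <= f (x + 1).
  have [k km ex] := divz_decomp m x.
  have ex1 : x + 1 = k.+1%:Z + (x %/ m.+1%:Z)%Z * m.+1%:Z.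
    by rewrite {1}ex -addn1 PoszD; ring.
  by rewrite ex1 {1}ex !(qperiodicMz fP) lerD2r f_step.
move=> x y le_xy.
have [k ->] : exists k : nat, y = x + k%:Z.
  by exists `|y - x|%N; rewrite abszE ger0_norm ?subr_ge0 //; ring.
elim: k => [|k IH]; first by rewrite addr0.
by apply: (le_trans IH); rewrite -addn1 PoszD addrA.
Qed.

Lemma eps_qperiodic (N i : nat) : qperiodic N.+1 N.+2 (eps N.+1 i).
Proof.
move=> j; rewrite /eps.
have -> : j + N.+1%:Z = 1 * N.+1%:Z + j by rewrite mul1r addrC.
by rewrite divzMDl // modzMDl; ring.
Qed.

Lemma eta_qperiodic (N i : nat) : qperiodic N.+2 N.+1 (eta N i).
Proof.
move=> j; rewrite /eta.
have -> : j + N.+2%:Z = 1 * N.+2%:Z + j by rewrite mul1r addrC.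
by rewrite divzMDl // modzMDl; ring.
Qed.

(* The last point of the period is read off through periodicity. *)
Lemma epsE (N i k : nat) : (k <= N.+1)%N ->
  eps N.+1 i k%:Z = (if (k < N.+1)%N then (if (k < i)%N then k else k.+1)
                     else N.+2 + (if (0 < i)%N then 0 else 1))%N%:Z.
Proof.
move=> kN; case: ltnP => kN'.
  rewrite /eps divz_small ?modz_small; try lia.
  by rewrite mul0r add0r ltz_nat; case: ltnP => h; lia.
have -> : k = N.+1 by lia.
rewrite -[N.+1%:Z]add0r eps_qperiodic /eps divz_small ?modz_small; try lia.
by rewrite mul0r add0r ltz_nat; case: ltnP => h; lia.
Qed.

Lemma etaE (N i k : nat) : (k <= N.+2)%N ->
  eta N i k%:Z = (if (k < N.+2)%N then (if (k <= i)%N then k else k - 1)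
                  else N.+1)%N%:Z.
Proof.
move=> kN; case: ltnP => kN'.
  rewrite /eta divz_small ?modz_small; try lia.
  by rewrite mul0r add0r lez_nat; case: leqP => h; lia.
have -> : k = N.+2 by lia.
by rewrite -[N.+2%:Z]add0r eta_qperiodic /eta divz_small ?modz_small.
Qed.

Ltac case_ifs := repeat match goal with |- context [if ?b then _ else _] =>
  lazymatch b with
  | context [if _ then _ else _] => fail
  | true => fail | false => fail
  | _ => case: (boolP b) => ?; cbv iota end end.

(* Identities between maps of Lambda_+ are checked on one period, where all
   values are explicit naturals. *)
Ltac check_on_period :=
  move=> k hk /=; rewrite ?epsE ?etaE //; try lia;
  rewrite ?epsE ?etaE //; try lia; rewrite ?epsE ?etaE //; try lia;
  try (congr Posz); case_ifs; lia.

Lemma eps_isLam n i : (i <= n.+1)%N -> isLam n n.+1 (eps n.+1 i).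
Proof.
move=> hi; apply: qperiodic_isLam; first exact: eps_qperiodic.
- by rewrite -[0]/(Posz 0) epsE //; case_ifs; lia.
- by check_on_period.
Qed.

Lemma eta_isLam n i : (i <= n.+1)%N -> isLam n.+1 n (eta n i).
Proof.
move=> hi; apply: qperiodic_isLam; first exact: eta_qperiodic.
- by rewrite -[0]/(Posz 0) etaE //; case_ifs; lia.
- by check_on_period.
Qed.

Lemma eps_eps n i j : (i < j)%N -> (j <= n.+2)%N ->
  eps n.+2 j \o eps n.+1 i = eps n.+2 i \o eps n.+1 j.-1.
Proof.
move=> ij jn; apply: (@qperiodic_eq n n.+3%:Z).
- exact: qperiodic_comp (eps_qperiodic _ _) (eps_qperiodic _ _).
- exact: qperiodic_comp (eps_qperiodic _ _) (eps_qperiodic _ _).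
- by check_on_period.
Qed.

Lemma eta_eta n i j : (i <= j)%N -> (j <= n.+1)%N ->
  eta n j \o eta n.+1 i = eta n i \o eta n.+1 j.+1.
Proof.
move=> ij jn; apply: (@qperiodic_eq n.+2 n.+1%:Z).
- exact: qperiodic_comp (eta_qperiodic _ _) (eta_qperiodic _ _).
- exact: qperiodic_comp (eta_qperiodic _ _) (eta_qperiodic _ _).
- by check_on_period.
Qed.

Lemma eta_eps n i : (i <= n.+1)%N -> eta n i \o eps n.+1 i = id.
Proof.
move=> in_; apply: (@qperiodic_eq n n.+1%:Z) => //.
- exact: qperiodic_comp (eps_qperiodic _ _) (eta_qperiodic _ _).
- by check_on_period.
Qed.

Lemma eta_epsS n i : (i <= n)%N -> eta n i \o eps n.+1 i.+1 = id.
Proof.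
move=> in_; apply: (@qperiodic_eq n n.+1%:Z) => //.
- exact: qperiodic_comp (eps_qperiodic _ _) (eta_qperiodic _ _).
- by check_on_period.
Qed.

Lemma eta_eps_lt m i j : (i < j)%N -> (j <= m.+2)%N ->
  (0 < i)%N || (j < m.+2)%N ->
  eta m.+1 j \o eps m.+2 i = eps m.+1 i \o eta m j.-1.
Proof.
move=> ij jm corner; apply: (@qperiodic_eq m.+1 m.+2%:Z).
- exact: qperiodic_comp (eps_qperiodic _ _) (eta_qperiodic _ _).
- exact: qperiodic_comp (eta_qperiodic _ _) (eps_qperiodic _ _).
- by check_on_period.
Qed.

Lemma eta_eps_gt m i j : (j.+1 < i)%N -> (i <= m.+2)%N ->
  eta m.+1 j \o eps m.+2 i = eps m.+1 i.-1 \o eta m j.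
Proof.
move=> ji im; apply: (@qperiodic_eq m.+1 m.+2%:Z).
- exact: qperiodic_comp (eps_qperiodic _ _) (eta_qperiodic _ _).
- exact: qperiodic_comp (eta_qperiodic _ _) (eps_qperiodic _ _).
- by check_on_period.
Qed.

Section SimplicialIdentities.
Variables (C : PreAdditive) (M : Duplicial C).

Ltac fold_Mf_comp :=
  rewrite /face /degen -!Mf_comp; try (apply: eps_isLam; lia);
  try (apply: eta_isLam; lia).

Lemma face_face n i j : (i < j)%N -> (j <= n.+2)%N ->
  cmp (face M n i) (face M n.+1 j) = cmp (face M n j.-1) (face M n.+1 i).
Proof. by move=> ij jn; fold_Mf_comp; rewrite eps_eps. Qed.

Lemma degen_degen n i j : (i <= j)%N -> (j <= n.+1)%N ->
  cmp (degen M n.+1 i) (degen M n j) = cmp (degen M n.+1 j.+1) (degen M n i).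
Proof. by move=> ij jn; fold_Mf_comp; rewrite eta_eta. Qed.

Lemma face_degen n i : (i <= n.+1)%N ->
  cmp (face M n i) (degen M n i) = idm (Mo M n).
Proof. by move=> in_; fold_Mf_comp; rewrite eta_eps // Mf_id. Qed.

Lemma faceS_degen n i : (i <= n)%N ->
  cmp (face M n i.+1) (degen M n i) = idm (Mo M n).
Proof. by move=> in_; fold_Mf_comp; rewrite eta_epsS // Mf_id. Qed.

Lemma face_degen_lt m i j : (i < j)%N -> (j <= m.+2)%N ->
  (0 < i)%N || (j < m.+2)%N ->
  cmp (face M m.+1 i) (degen M m.+1 j) = cmp (degen M m j.-1) (face M m i).
Proof. by move=> ij jm corner; fold_Mf_comp; rewrite eta_eps_lt. Qed.

Lemma face_degen_gt m i j : (j.+1 < i)%N -> (i <= m.+2)%N ->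
  cmp (face M m.+1 i) (degen M m.+1 j) = cmp (degen M m j) (face M m i.-1).
Proof. by move=> ji im; fold_Mf_comp; rewrite eta_eps_gt. Qed.

End SimplicialIdentities.

Section SignedDoubleSums.
Variable V : zmodType.

Lemma sum_square_recr (F : nat -> nat -> V) N :
  \sum_(i < N.+1) \sum_(j < N.+1) F i j =
  \sum_(i < N) \sum_(j < N) F i j +
  ((\sum_(j < N) F N j + \sum_(i < N) F i N) + F N N).
Proof.
rewrite big_ord_recr /=.
under eq_bigr => i _ do rewrite big_ord_recr /=.
rewrite big_split /= big_ord_recr /= -!addrA; congr (_ + _).
by rewrite addrCA addrA.
Qed.

Lemma sum_rect_recr (F : nat -> nat -> V) N :
  \sum_(i < N.+1) \sum_(j < N.+2) F i j =
  \sum_(i < N) \sum_(j < N.+1) F i j +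
  (\sum_(i < N) F i N.+1 + \sum_(j < N.+2) F N j).
Proof.
rewrite big_ord_recr /=.
under eq_bigr => i _ do rewrite big_ord_recr /=.
by rewrite big_split /= -!addrA.
Qed.

Lemma sum_skew_eq0 (F : nat -> nat -> V) N :
  (forall i j, (i < j)%N -> (j <= N)%N -> F i j = - F j.-1 i) ->
  \sum_(i < N) \sum_(j < N.+1) F i j = 0.
Proof.
elim: N => [|N IH] Fskew; first by rewrite big_ord0.
rewrite sum_rect_recr IH ?add0r => [|i j ij jN]; last by apply: Fskew; lia.
have -> : \sum_(i < N) F i N.+1 = - \sum_(i < N) F N i.
  by rewrite -sumrN; apply: eq_bigr => i _; rewrite Fskew //=; have := ltn_ord i; lia.
by rewrite !big_ord_recr /= (Fskew N N.+1) // addrK addNr.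
Qed.

Lemma sum_eq_except_corner (c c' : nat -> nat -> V) K :
  (forall i j, (i <= K)%N -> (j <= K)%N -> (i != 0%N) || (j != K) ->
     c i j = c' i j) ->
  \sum_(i < K.+1) \sum_(j < K.+1) c i j *~ sgn (i + j) =
  \sum_(i < K.+1) \sum_(j < K.+1) c' i j *~ sgn (i + j)
    + (c 0%N K - c' 0%N K) *~ sgn K.
Proof.
move=> cc'; rewrite addrC; apply/eqP; rewrite -subr_eq -sumrB.
under eq_bigr => i _ do rewrite -sumrB.
rewrite big_ord_recl [X in _ + X]big1 => [|i _]; last first.
  apply: big1 => j _; have jK := ltn_ord j.
  by rewrite -mulrzBl cc' ?subrr ?mul0rz //=; lia.
rewrite addr0 big_ord_recr [\sum_(j < K) _]big1 => [|j _]; last first.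
  by have jK := ltn_ord j; rewrite -mulrzBl cc' ?subrr ?mul0rz //=; lia.
by rewrite /= add0r -mulrzBl.
Qed.

(* After the simplicial identities, the term of index (i, j) of b d is [u]
   (the identity) on the diagonals j = i and j = i - 1 and a term of d b
   elsewhere. *)
Definition mixed_term (u : V) (d : nat -> nat -> V) (i j : nat) : V :=
  if (i == j) || (i == j.+1) then u
  else if (i < j)%N then d i j.-1 else d i.-1 j.

Lemma sum_mixed_term (u : V) (d : nat -> nat -> V) K :
  \sum_(i < K.+1) \sum_(j < K.+1) mixed_term u d i j *~ sgn (i + j) +
  \sum_(i < K) \sum_(j < K) d i j *~ sgn (i + j) = u.
Proof.
elim: K => [|K IH].
  by rewrite !big_ord1 big_ord0 /mixed_term /= addr0.
rewrite (sum_square_recr (fun i j => mixed_term u d i j *~ sgn (i + j))).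
rewrite (sum_square_recr (fun i j => d i j *~ sgn (i + j))) addrACA IH.
set A := \sum_(j < K) d K j *~ sgn (K + j).
set B := \sum_(i < K) d i K *~ sgn (i + K).
have -> : \sum_(j < K.+1) mixed_term u d K.+1 j *~ sgn (K.+1 + j) = - A - u.
  rewrite big_ord_recr /= /mixed_term eqxx orbT addSn sgnS sgn_double -sumrN.
  congr (_ + _); apply: eq_bigr => j _; rewrite addSn sgnS mulrNz.
  have jK := ltn_ord j.
  have -> : (K.+1 == j) || (K.+1 == j.+1) = false by apply/negbTE; lia.
  by have -> : (K.+1 < j)%N = false by apply/negbTE; lia.
have -> : \sum_(i < K.+1) mixed_term u d i K.+1 *~ sgn (i + K.+1) =
          - B - d K K *~ sgn (K + K).
  rewrite big_ord_recr /= /mixed_term -sumrN.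
  have -> : (K == K.+1) || (K == K.+2) = false by apply/negbTE; lia.
  rewrite ltnSn /= addnS sgnS mulrNz; congr (_ + _).
  apply: eq_bigr => i _; rewrite addnS sgnS mulrNz.
  have iK := ltn_ord i.
  have -> : (i == K.+1 :> nat) || (i == K.+2 :> nat) = false by apply/negbTE; lia.
  by rewrite /= (ltn_trans iK (ltnSn K)).
rewrite /mixed_term eqxx /= -[RHS]addr0; congr (_ + _).
by rewrite !sgn_double !mulr1z (addrAC (- A - u)) subrK -!opprD (addrA A) addNr.
Qed.

End SignedDoubleSums.

Section DuplicialModule.
Variables (C : PreAdditive) (M : Duplicial C).

Lemma cmp_bb_bb n : cmp (bb M n) (bb M n.+1) = 0.
Proof.
rewrite /bb (cmp_signed_sums _ _ (face M n) (face M n.+1)).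
apply: (@sum_skew_eq0 _ (fun i j => cmp (face M n i) (face M n.+1 j) *~ sgn (i + j)) n.+2).
move=> i j ij jn /=; rewrite face_face //.
have -> : (i + j = (j.-1 + i).+1)%N by lia.
by rewrite sgnS mulrNz.
Qed.

Lemma cmp_dd_dd n : cmp (dd M n.+1) (dd M n) = 0.
Proof.
rewrite /dd (cmp_signed_sums _ _ (degen M n.+1) (degen M n)) exchange_big /=.
apply: (@sum_skew_eq0 _ (fun a b => cmp (degen M n.+1 b) (degen M n a) *~ sgn (b + a)) n.+2).
move=> a b ab bn /=; rewrite (@degen_degen _ M n a b.-1); try lia.
have -> : b.-1.+1 = b by lia.
have -> : (b + a = (a + b.-1).+1)%N by lia.
by rewrite sgnS mulrNz.
Qed.

Lemma cmp_bd_db n : cmp (bd M n) (db M n) = 0.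
Proof.
case: n => [|m]; first exact: cmp0r.
by rewrite /bd -Defs.compA (Defs.compA (dd M m.+1)) cmp_dd_dd cmp0l cmp0r.
Qed.

Lemma cmp_db_bd n : cmp (db M n) (bd M n) = 0.
Proof.
case: n => [|m]; first exact: cmp0l.
by rewrite /bd -Defs.compA (Defs.compA (bb M m)) cmp_bb_bb cmp0l cmp0r.
Qed.

Definition db_term (n : nat) : nat -> nat -> Defs.Hom (Mo M n) (Mo M n) :=
  match n with
  | 0 => fun _ _ => 0
  | m.+1 => fun i j => cmp (degen M m j) (face M m i)
  end.

Lemma db_sum n :
  db M n = \sum_(i < n.+1) \sum_(j < n.+1) db_term n i j *~ sgn (i + j).
Proof.
case: n => [|m]; first by rewrite /= !big_ord1 mul0rz.
rewrite /db /dd /bb (cmp_signed_sums _ _ (degen M m) (face M m)) exchange_big.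
by apply: eq_bigr => i _; apply: eq_bigr => j _; rewrite addnC.
Qed.

Lemma bd_sum n : bd M n =
  \sum_(i < n.+2) \sum_(j < n.+2) cmp (face M n i) (degen M n j) *~ sgn (i + j).
Proof. exact: (cmp_signed_sums _ _ (face M n) (degen M n)). Qed.

Lemma face_degen_mixed n i j : (i <= n.+1)%N -> (j <= n.+1)%N ->
  (i != 0%N) || (j != n.+1) ->
  cmp (face M n i) (degen M n j) = mixed_term (idm (Mo M n)) (db_term n) i j.
Proof.
move=> in_ jn corner; rewrite /mixed_term.
case: ifP => [/orP [/eqP -> | /eqP iS] | /norP [ij ijS]].
- exact: face_degen.
- by rewrite iS faceS_degen //; lia.
case: n in_ jn corner => [|m] in_ jn corner; first lia.
case: ltnP => [lt_ij | le_ji] /=.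
- by apply: face_degen_lt; lia.
- by apply: face_degen_gt; lia.
Qed.

Lemma bd_add_db n : bd M n + db M n = idm (Mo M n) - kappa M n.
Proof.
rewrite bd_sum db_sum (sum_eq_except_corner (face_degen_mixed (n := n))).
rewrite addrAC sum_mixed_term /mixed_term /=.
have -> : db_term n 0 n = sface M n by case: n.
by rewrite /kappa sgnS mulrNz.
Qed.

End DuplicialModule.

Theorem mainTheorem10 (C : PreAdditive) (M : Duplicial C) (n : nat) :
  kappa M n = cmp (idm (Mo M n) - bd M n) (idm (Mo M n) - db M n) /\
  kappa M n = cmp (idm (Mo M n) - db M n) (idm (Mo M n) - bd M n).
Proof.
have kappaE : kappa M n = idm (Mo M n) - (bd M n + db M n).
  by rewrite bd_add_db opprB addrC subrK.
by rewrite kappaE !cmp_sub1_sub1 ?cmp_bd_db ?cmp_db_bd // [db M n + _]addrC.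
Qed.
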